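(* Let $Q$ be a set, $(F_i)_{i\in I}$ a family of real-valued maps on $Q$ and $(k_i)_{i\in I}$ a bounded family of nonnegative reals. Assume $\sum_{t\in S}|F_i(t)|\le k_i\mod c_0(I)$ for every finite $S\subseteq Q$, and that $\{i\in I:F_i(t)\ne0\}$ is countable for every $t\in Q$. Then the following are equivalent: (a) $(F_i)_{i\in I}$ is of type $c_0\ell_1$; (b) there exist disjoint sets $A,B$ with $I\times Q=A\cup B$ such that $\lim_{i\in I}F_i(t)\chi_A(i,t)=0$ for all $t\in Q$ and $B_i=\{t\in Q:(i,t)\in B\}$ is countable for all $i\in I$; (c) $(F_i)_{i\in I}$ is of type $c_0\ell_1$ bounded by $(k_i)_{i\in I}$.
   Context: $\lim_{i\in I}a_i=0$ means $\{i:|a_i|\ge\varepsilon\}$ is finite for every $\varepsilon>0$; $c_0(I)$ is the set of such families. ''$x_i\le y_i\mod c_0(I)$'' means $\{i:x_i\ge y_i+\varepsilon\}$ is finite for every $\varepsilon>0$. $\chi_A$ is the characteristic function of $A$. $(F_i)$ is of type $c_0\ell_1$ if $F_i(t)=a_{i,t}+b_{i,t}$ ($i\in I$, $t\in Q$) with $\lim_ia_{i,t}=0$ for each $t\in Q$ and $\sup_i\sum_{t\in Q}|b_{i,t}|<\infty$; it is of type $c_0\ell_1$ bounded by $(k_i)$ if additionally $\sum_{t\in Q}|b_{i,t}|\le k_i$ for each $i$. *)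

From Stdlib Require Import Reals List Classical ClassicalDescription.
Import ListNotations.
Open Scope R_scope.

Definition finite_pred {T : Type} (P : T -> Prop) : Prop :=
  exists l : list T, forall x, P x -> In x l.

Definition countable_pred {T : Type} (P : T -> Prop) : Prop :=
  exists g : T -> nat, forall x y, P x -> P y -> g x = g y -> x = y.

Definition lim0 {I : Type} (a : I -> R) : Prop :=
  forall eps, 0 < eps -> finite_pred (fun i => eps <= Rabs (a i)).

Definition le_mod_c0 {I : Type} (x y : I -> R) : Prop :=
  forall eps, 0 < eps -> finite_pred (fun i => y i + eps <= x i).

(* Sum of f over a finite set given as a duplicate-free list. *)
Definition lsum {T : Type} (f : T -> R) (S : list T) : R :=
  fold_right (fun t acc => f t + acc) 0 S.

(* sum_{t in Q} |f t| <= k  (unordered sum of nonnegative terms = sup of finite partial sums) *)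
Definition abs_sum_le {Q : Type} (f : Q -> R) (k : R) : Prop :=
  forall S : list Q, NoDup S -> lsum (fun t => Rabs (f t)) S <= k.

Definition chi {I Q : Type} (A : I -> Q -> Prop) (i : I) (t : Q) : R :=
  if excluded_middle_informative (A i t) then 1 else 0.

Definition type_c0l1 {I Q : Type} (F : I -> Q -> R) : Prop :=
  exists a b : I -> Q -> R,
    (forall i t, F i t = a i t + b i t) /\
    (forall t, lim0 (fun i => a i t)) /\
    (exists M : R, forall i, abs_sum_le (b i) M).

Definition type_c0l1_bounded {I Q : Type} (F : I -> Q -> R) (k : I -> R) : Prop :=
  exists a b : I -> Q -> R,
    (forall i t, F i t = a i t + b i t) /\
    (forall t, lim0 (fun i => a i t)) /\
    (forall i, abs_sum_le (b i) (k i)).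

(* (a) => (b): write F = a + b; for each i the support of the l1 part b_i is
   countable, so take B = {b <> 0}.  (c) => (a) is immediate since k is bounded.
   (b) => (c): call s and u linked when both lie in B_i and in the support of F_i
   for some i.  A point is linked to countably many points (a countable union over
   the i with F_i(s) <> 0 of the countable B_i), so each class of the generated
   equivalence is countable, and for fixed i the relevant points of B_i all lie in
   one class.  Enumerate every class once and for all; for each i walk through its
   points in that order, letting b_i follow F_i clamped to the part of the budget
   k_i not yet used.  Then sum |b_i| <= k_i, and |F_i(t) - b_i(t)| >= eps forces
   k_i + eps <= sum |F_i| over the first rank(t)+1 points of the class of t, a
   finite set independent of i, which by hypothesis happens for finitely many i. *)
From Stdlib Require Import Reals List Lra Lia Classical ClassicalEpsilon
  ClassicalDescription FunctionalExtensionality PropExtensionality Relations Cantor.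
Import ListNotations.
Open Scope R_scope.

Definition enumerable {T : Type} (P : T -> Prop) : Prop :=
  exists f : nat -> option T, forall x, P x -> exists n, f n = Some x.

Lemma enumerable_mono {T : Type} (P P' : T -> Prop) :
  (forall x, P x -> P' x) -> enumerable P' -> enumerable P.
Proof. intros HP [f Hf]; exists f; auto. Qed.

Lemma countable_enumerable {T : Type} (P : T -> Prop) :
  countable_pred P -> enumerable P.
Proof.
  intros [g Hg].
  exists (fun n => match excluded_middle_informative (exists x, P x /\ g x = n) with
          | left H => Some (proj1_sig (constructive_indefinite_description _ H))
          | right _ => None end).
  intros x Px; exists (g x).
  destruct (excluded_middle_informative _) as [H|H].
  - destruct (constructive_indefinite_description _ H) as [y [Py Hy]]; simpl.
    f_equal; apply Hg; auto.
  - exfalso; eauto.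
Qed.

Lemma enumerable_countable {T : Type} (P : T -> Prop) :
  enumerable P -> countable_pred P.
Proof.
  intros [f Hf].
  exists (fun x => match excluded_middle_informative (exists n, f n = Some x) with
          | left H => proj1_sig (constructive_indefinite_description _ H)
          | right _ => O end).
  intros x y Px Py.
  destruct (excluded_middle_informative (exists n, f n = Some x)) as [Hx|]; [|exfalso; auto].
  destruct (excluded_middle_informative (exists n, f n = Some y)) as [Hy|]; [|exfalso; auto].
  destruct (constructive_indefinite_description _ Hx) as [n Hn].
  destruct (constructive_indefinite_description _ Hy) as [m Hm]; simpl.
  intros ->; congruence.
Qed.

Lemma finite_enumerable {T : Type} (P : T -> Prop) : finite_pred P -> enumerable P.
Proof.
  intros [l Hl]; exists (nth_error l).
  intros x Px; apply In_nth_error, Hl, Px.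
Qed.

Definition enum {T : Type} (P : T -> Prop) : nat -> option T :=
  epsilon (inhabits (fun _ => None))
    (fun f => forall x, P x -> exists n, f n = Some x).

Lemma enum_spec {T : Type} (P : T -> Prop) :
  enumerable P -> forall x, P x -> exists n, enum P n = Some x.
Proof. apply (epsilon_spec _ (fun f => forall x, P x -> exists n, f n = Some x)). Qed.

Definition rank {T : Type} (P : T -> Prop) (x : T) : nat :=
  epsilon (inhabits O) (fun n => enum P n = Some x).

Lemma enum_rank {T : Type} (P : T -> Prop) x :
  enumerable P -> P x -> enum P (rank P x) = Some x.
Proof.
  intros HP Px; apply (epsilon_spec _ (fun n => enum P n = Some x)).
  apply enum_spec; assumption.
Qed.

Lemma enumerable_bigcup {J T : Type} (PJ : J -> Prop) (P : J -> T -> Prop) :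
  enumerable PJ -> (forall j, enumerable (P j)) ->
  enumerable (fun x => exists j, PJ j /\ P j x).
Proof.
  intros [h Hh] HP.
  exists (fun m => match h (fst (of_nat m)) with
                   | Some j => enum (P j) (snd (of_nat m)) | None => None end).
  intros x [j [Hj Hx]].
  destruct (Hh j Hj) as [n Hn]; destruct (enum_spec _ (HP j) x Hx) as [p Hp].
  exists (to_nat (n, p)); rewrite cancel_of_to; simpl; rewrite Hn; exact Hp.
Qed.

Lemma enumerable_nat_bigcup {T : Type} (P : nat -> T -> Prop) :
  (forall n, enumerable (P n)) -> enumerable (fun x => exists n, P n x).
Proof.
  intros HP; exists (fun m => enum (P (fst (of_nat m))) (snd (of_nat m))).
  intros x [n Hx]; destruct (enum_spec _ (HP n) x Hx) as [p Hp].
  exists (to_nat (n, p)); rewrite cancel_of_to; exact Hp.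
Qed.

Section EquivalenceClass.
Variables (T : Type) (E : T -> T -> Prop).

Fixpoint steps_from (n : nat) (t : T) : T -> Prop :=
  match n with
  | O => eq t
  | S n => fun u => exists s, steps_from n t s /\ (E s u \/ E u s)
  end.

Lemma clos_rst_steps_from t u :
  clos_refl_sym_trans T E t u -> exists n, steps_from n t u.
Proof.
  intros Htu; apply clos_rst_rstn1_iff in Htu.
  induction Htu as [|s u Hsu _ [n Hn]]; [now exists O|].
  exists (S n); simpl; eauto.
Qed.

Lemma enumerable_rst_class :
  (forall s, enumerable (fun u => E s u \/ E u s)) ->
  forall t, enumerable (clos_refl_sym_trans T E t).
Proof.
  intros HE t.
  apply (enumerable_mono _ _ (clos_rst_steps_from t)), enumerable_nat_bigcup.
  intros n; induction n as [|n IHn]; simpl.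
  - exists (fun _ => Some t); intros x <-; now exists O.
  - apply enumerable_bigcup; assumption.
Qed.

End EquivalenceClass.

Lemma lsum_app {T : Type} (f : T -> R) l1 l2 :
  lsum f (l1 ++ l2) = lsum f l1 + lsum f l2.
Proof. induction l1 as [|x l1 IH]; simpl; [lra|]; unfold lsum in *; rewrite IH; lra. Qed.

Lemma lsum_seq_S (w : nat -> R) n : lsum w (seq 0 (S n)) = lsum w (seq 0 n) + w n.
Proof. rewrite seq_S, lsum_app; simpl; unfold lsum; simpl; lra. Qed.

Lemma lsum_nonneg {T : Type} (f : T -> R) l :
  (forall x, In x l -> 0 <= f x) -> 0 <= lsum f l.
Proof.
  induction l as [|x l IH]; intros Hf; simpl; [lra|].
  pose proof (Hf x (in_eq x l)); pose proof (IH (fun y Hy => Hf y (in_cons x y l Hy))).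
  unfold lsum in *; lra.
Qed.

Lemma lsum_const_le {T : Type} (f : T -> R) d l :
  (forall x, In x l -> d <= f x) -> d * INR (length l) <= lsum f l.
Proof.
  induction l as [|x l IH]; intros Hf; simpl length; [simpl; lra|]; rewrite S_INR.
  pose proof (Hf x (in_eq x l)); pose proof (IH (fun y Hy => Hf y (in_cons x y l Hy))).
  unfold lsum in *; simpl; lra.
Qed.

Lemma lsum_le_inj {U V : Type} (f : U -> R) (g : V -> R) (phi : U -> V)
    (L : list U) (M : list V) :
  NoDup L -> NoDup M -> (forall v, In v M -> 0 <= g v) ->
  (forall u, In u L -> 0 < f u -> In (phi u) M /\ f u <= g (phi u)) ->
  (forall u u', In u L -> In u' L -> 0 < f u -> 0 < f u' -> phi u = phi u' -> u = u') ->
  lsum f L <= lsum g M.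
Proof.
  revert M; induction L as [|u L IH]; intros M HL HM Hg Hf Hinj.
  - apply lsum_nonneg; assumption.
  - apply NoDup_cons_iff in HL as [HuL HL]; change (f u + lsum f L <= lsum g M).
    destruct (Rle_or_lt (f u) 0) as [Hu|Hu].
    + enough (lsum f L <= lsum g M) by lra.
      apply IH; auto; intros; [apply Hf | apply Hinj]; simpl; auto.
    + destruct (Hf u (in_eq u L) Hu) as [Hin Hle].
      destruct (in_split _ _ Hin) as [M1 [M2 ->]].
      rewrite lsum_app; change (lsum g (phi u :: M2)) with (g (phi u) + lsum g M2).
      enough (lsum f L <= lsum g (M1 ++ M2)) by (rewrite lsum_app in *; lra).
      apply IH; auto.
      * eapply NoDup_remove_1; eauto.
      * intros v Hv; apply Hg, in_or_app; apply in_app_or in Hv; simpl; tauto.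
      * intros u' Hu' Hpos; destruct (Hf u' (in_cons _ _ _ Hu') Hpos) as [Hin' Hle'].
        split; [|assumption].
        apply in_app_or in Hin' as [|[Heq|]]; try (apply in_or_app; simpl; tauto).
        exfalso; assert (u' = u) as -> by (apply Hinj; simpl; auto); auto.
      * intros; apply Hinj; simpl; auto.
Qed.

Lemma finite_of_bounded_nodup {T : Type} (P : T -> Prop) (K : nat) :
  (forall l, NoDup l -> (forall x, In x l -> P x) -> (length l <= K)%nat) ->
  finite_pred P.
Proof.
  intros HK; apply NNPP; intros Hinf.
  assert (Hlong : forall n, exists l, NoDup l /\ (forall x, In x l -> P x) /\ length l = n).
  { induction n as [|n [l [Hnd [HlP Hlen]]]].
    - exists []; repeat split; [constructor | simpl; tauto].
    - assert (exists x, P x /\ ~ In x l) as [x [Px Hx]].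
      { apply NNPP; intros Hno; apply Hinf; exists l; intros x Px.
        apply NNPP; intros Hx; apply Hno; eauto. }
      exists (x :: l); repeat split; [constructor; auto | | simpl; auto].
      intros y [<-|Hy]; auto. }
  destruct (Hlong (S K)) as [l [Hnd [HlP Hlen]]]; specialize (HK l Hnd HlP); lia.
Qed.

Lemma abs_sum_le_finite_level {Q : Type} (b : Q -> R) M d :
  abs_sum_le b M -> 0 < d -> finite_pred (fun t => d <= Rabs (b t)).
Proof.
  intros HM Hd; destruct (INR_unbounded (M / d)) as [K HK].
  apply (finite_of_bounded_nodup _ K); intros l Hnd Hl.
  pose proof (lsum_const_le _ _ _ Hl); specialize (HM l Hnd).
  assert (INR (length l) <= M / d).
  { apply (Rmult_le_reg_l d); [assumption|]; field_simplify; lra. }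
  apply INR_le; lra.
Qed.

Lemma abs_sum_le_countable_support {Q : Type} (b : Q -> R) M :
  abs_sum_le b M -> countable_pred (fun t => b t <> 0).
Proof.
  intros HM; apply enumerable_countable.
  apply (enumerable_mono _ (fun t => exists n, / INR (S n) <= Rabs (b t))).
  - intros t Ht; destruct (archimed_cor1 (Rabs (b t))) as [[|n] [Hn Hpos]];
      [apply Rabs_pos_lt; assumption | lia | exists n; lra].
  - apply enumerable_nat_bigcup; intros n.
    apply finite_enumerable, (abs_sum_le_finite_level b M); [assumption|].
    apply Rinv_0_lt_compat, lt_0_INR; lia.
Qed.

Definition clamp (m x : R) : R := Rmax (- m) (Rmin x m).

Lemma Rabs_clamp m x : 0 <= m -> Rabs (clamp m x) = Rmin (Rabs x) m.
Proof.
  intros Hm; unfold clamp, Rmax, Rmin, Rabs.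
  repeat (destruct (Rle_dec _ _) || destruct (Rcase_abs _)); lra.
Qed.

Lemma Rabs_sub_clamp m x : 0 <= m -> Rabs (x - clamp m x) = Rmax 0 (Rabs x - m).
Proof.
  intros Hm; unfold clamp, Rmax, Rmin, Rabs.
  repeat (destruct (Rle_dec _ _) || destruct (Rcase_abs _)); lra.
Qed.

Lemma lsum_greedy (x : nat -> R) K N : 0 <= K -> (forall n, 0 <= x n) ->
  lsum (fun n => Rmin (x n) (Rmax 0 (K - lsum x (seq 0 n)))) (seq 0 N)
  = Rmin K (lsum x (seq 0 N)).
Proof.
  intros HK Hx; induction N as [|N IH].
  - simpl; unfold Rmin; destruct (Rle_dec _ _); lra.
  - rewrite !lsum_seq_S, IH.
    assert (0 <= lsum x (seq 0 N)) by (apply lsum_nonneg; auto).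
    specialize (Hx N); unfold Rmin, Rmax; repeat destruct (Rle_dec _ _); lra.
Qed.

Lemma list_nat_bound {T : Type} (g : T -> nat) (l : list T) :
  exists N, forall x, In x l -> (g x < N)%nat.
Proof.
  induction l as [|x l [N HN]]; [exists O; simpl; tauto|].
  exists (Nat.max (S (g x)) N); intros y [<-|Hy]; [|specialize (HN y Hy)]; lia.
Qed.

Definition c0_countable_split {I Q : Type} (F : I -> Q -> R) : Prop :=
  exists A B : I -> Q -> Prop,
    (forall i t, A i t \/ B i t) /\
    (forall i t, ~ (A i t /\ B i t)) /\
    (forall t, lim0 (fun i => F i t * chi A i t)) /\
    (forall i, countable_pred (fun t => B i t)).

Lemma type_c0l1_split {I Q : Type} (F : I -> Q -> R) :
  type_c0l1 F -> c0_countable_split F.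
Proof.
  intros [a [b [HF [Ha [M HM]]]]].
  exists (fun i t => b i t = 0), (fun i t => b i t <> 0); repeat split.
  - intros i t; tauto.
  - intros i t [H0 H1]; auto.
  - intros t eps Heps; destruct (Ha t eps Heps) as [l Hl]; exists l; intros i Hi.
    apply Hl; unfold chi in Hi; destruct (excluded_middle_informative (b i t = 0)) as [H|H].
    + rewrite HF, H, Rplus_0_r, Rmult_1_r in Hi; exact Hi.
    + rewrite Rmult_0_r, Rabs_R0 in Hi; lra.
  - intros i; apply (abs_sum_le_countable_support (b i) M), HM.
Qed.

Lemma type_c0l1_bounded_type_c0l1 {I Q : Type} (F : I -> Q -> R) (k : I -> R) :
  (exists K, forall i, k i <= K) -> type_c0l1_bounded F k -> type_c0l1 F.
Proof.
  intros [K HK] [a [b [HF [Ha Hb]]]]; exists a, b; repeat split; auto.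
  exists K; intros i S HS; specialize (Hb i S HS); specialize (HK i); lra.
Qed.

Section GreedyTruncation.
Variables (I Q : Type) (F : I -> Q -> R) (k : I -> R) (A B : I -> Q -> Prop).
Hypothesis hk0 : forall i, 0 <= k i.
Hypothesis hS : forall S : list Q, NoDup S ->
  le_mod_c0 (fun i => lsum (fun t => Rabs (F i t)) S) k.
Hypothesis hcount : forall t, countable_pred (fun i => F i t <> 0).
Hypothesis hAB : forall i t, A i t \/ B i t.
Hypothesis hA : forall t, lim0 (fun i => F i t * chi A i t).
Hypothesis hB : forall i, countable_pred (B i).

Definition Bsupp (i : I) (t : Q) : Prop := B i t /\ F i t <> 0.

Definition linked (s u : Q) : Prop := exists i, Bsupp i s /\ Bsupp i u.

Definition component (t : Q) : Q -> Prop := clos_refl_sym_trans Q linked t.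

Lemma enumerable_component t : enumerable (component t).
Proof.
  apply enumerable_rst_class; intros s.
  apply (enumerable_mono _ (fun u => exists i, F i s <> 0 /\ B i u)).
  - intros u [[i [[_ Hs] [Hu _]]] | [i [[Hu _] [_ Hs]]]]; eauto.
  - apply enumerable_bigcup; [apply countable_enumerable, hcount|].
    intros i; apply countable_enumerable, hB.
Qed.

Lemma component_Bsupp i s t : Bsupp i s -> Bsupp i t -> component s = component t.
Proof.
  intros Hs Ht; destruct (clos_rst_is_equiv Q linked) as [_ Htrans Hsym].
  assert (Hst : component s t) by (apply rst_step; exists i; auto).
  apply functional_extensionality; intros u; apply propositional_extensionality.
  split; intros Hu; [apply (Htrans t s u) | apply (Htrans s t u)]; auto.
Qed.

(* Every class is enumerated once and for all, independently of [i]; since the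
   points of [Bsupp i] form a single class, this orders all of them. *)
Definition cenum (t : Q) : nat -> option Q := enum (component t).

Definition crank (t : Q) : nat := rank (component t) t.

Lemma cenum_crank t : cenum t (crank t) = Some t.
Proof. apply enum_rank; [apply enumerable_component | apply rst_refl]. Qed.

(* The test [crank s = n] counts each point once although [f] may repeat it. *)
Definition weight (i : I) (f : nat -> option Q) (n : nat) : R :=
  match f n with
  | Some s => if excluded_middle_informative (Bsupp i s /\ crank s = n)
              then Rabs (F i s) else 0
  | None => 0
  end.

Definition budget (i : I) (t : Q) : R :=
  Rmax 0 (k i - lsum (weight i (cenum t)) (seq 0 (crank t))).

Definition bpart (i : I) (t : Q) : R :=
  if excluded_middle_informative (Bsupp i t) then clamp (budget i t) (F i t) else 0.

Lemma weight_nonneg i f n : 0 <= weight i f n.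
Proof.
  unfold weight; destruct (f n); [destruct (excluded_middle_informative _)|];
    [apply Rabs_pos | lra | lra].
Qed.

Lemma weight_crank i t : Bsupp i t -> weight i (cenum t) (crank t) = Rabs (F i t).
Proof.
  intros Ht; unfold weight; rewrite cenum_crank.
  destruct (excluded_middle_informative _); [reflexivity | exfalso; tauto].
Qed.

Lemma bpart_out i t : ~ Bsupp i t -> bpart i t = 0.
Proof. intros Ht; unfold bpart; destruct (excluded_middle_informative _); tauto. Qed.

Lemma Bsupp_bpart i t : 0 < Rabs (bpart i t) -> Bsupp i t.
Proof. intros Hpos; apply NNPP; intros Ht; rewrite bpart_out, Rabs_R0 in Hpos by assumption; lra. Qed.

Lemma Rabs_bpart i t :
  Bsupp i t -> Rabs (bpart i t) = Rmin (weight i (cenum t) (crank t)) (budget i t).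
Proof.
  intros Ht; unfold bpart; destruct (excluded_middle_informative _); [|contradiction].
  rewrite Rabs_clamp, weight_crank by (auto; apply Rmax_l); reflexivity.
Qed.

Lemma abs_sum_le_bpart i : abs_sum_le (bpart i) (k i).
Proof.
  intros St HSt; destruct (classic (exists t0, Bsupp i t0)) as [[t0 H0]|Hnone].
  2: { apply Rle_trans with (lsum (fun _ : Q => 0) []); [|apply hk0].
       apply (lsum_le_inj _ _ (fun t => t)); [assumption | constructor | simpl; tauto | |];
         intros t; intros; exfalso; apply Hnone; exists t; apply Bsupp_bpart; assumption. }
  set (f := cenum t0).
  set (y n := Rmin (weight i f n) (Rmax 0 (k i - lsum (weight i f) (seq 0 n)))).
  assert (Hf : forall t, Bsupp i t -> cenum t = f).
  { intros t Ht; unfold f, cenum; rewrite (component_Bsupp i t t0); auto. }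
  assert (Hy : forall t, Bsupp i t -> Rabs (bpart i t) = y (crank t)).
  { intros t Ht; rewrite Rabs_bpart by assumption; unfold budget, y.
    rewrite (Hf t Ht); reflexivity. }
  destruct (list_nat_bound crank St) as [N HN].
  apply Rle_trans with (lsum y (seq 0 N)).
  - apply (lsum_le_inj _ _ crank); auto using seq_NoDup.
    + intros n _; unfold y, Rmin; destruct (Rle_dec _ _); [apply weight_nonneg | apply Rmax_l].
    + intros t Ht Hpos; rewrite Hy by (apply Bsupp_bpart; assumption).
      split; [apply in_seq; specialize (HN t Ht); lia | lra].
    + intros t t' _ _ Hpos Hpos' Heq.
      pose proof (cenum_crank t) as Et; pose proof (cenum_crank t') as Et'.
      rewrite Hf in Et, Et' by (apply Bsupp_bpart; assumption).
      rewrite Heq in Et; congruence.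
  - unfold y; rewrite lsum_greedy; [apply Rmin_l | apply hk0 | apply weight_nonneg].
Qed.

Definition window (f : nat -> option Q) (d : Q) (N : nat) : list Q :=
  nodup (fun x y => excluded_middle_informative (x = y))
    (map (fun n => match f n with Some s => s | None => d end) (seq 0 N)).

Lemma lsum_weight_le_window i f d N :
  lsum (weight i f) (seq 0 N) <= lsum (fun s => Rabs (F i s)) (window f d N).
Proof.
  apply (lsum_le_inj _ _ (fun n => match f n with Some s => s | None => d end)).
  - apply seq_NoDup.
  - apply NoDup_nodup.
  - intros; apply Rabs_pos.
  - intros n Hn _; split; [apply nodup_In, in_map_iff; eauto|].
    unfold weight; destruct (f n) as [s|];
      [destruct (excluded_middle_informative _); pose proof (Rabs_pos (F i s))
      | pose proof (Rabs_pos (F i d))]; lra.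
  - intros n n' _ _ Hn Hn' Heq; unfold weight in Hn, Hn'.
    destruct (f n) as [s|]; [|lra]; destruct (f n') as [s'|]; [|lra].
    destruct (excluded_middle_informative (Bsupp i s /\ crank s = n)) as [[_ E]|]; [|lra].
    destruct (excluded_middle_informative (Bsupp i s' /\ crank s' = n')) as [[_ E']|]; [|lra].
    congruence.
Qed.

Lemma Rabs_apart_le i t : Bsupp i t ->
  Rabs (F i t - bpart i t)
  <= Rmax 0 (lsum (weight i (cenum t)) (seq 0 (S (crank t))) - k i).
Proof.
  intros Ht; unfold bpart; destruct (excluded_middle_informative _); [|contradiction].
  rewrite Rabs_sub_clamp by apply Rmax_l.
  rewrite lsum_seq_S, weight_crank by assumption; unfold budget, Rmax.
  repeat destruct (Rle_dec _ _); lra.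
Qed.

(* The window of the first [crank t + 1] points of the class of [t] does not
   depend on [i], so [hS] applies to it. *)
Lemma lim0_apart t : lim0 (fun i => F i t - bpart i t).
Proof.
  intros eps Heps.
  destruct (hS (window (cenum t) t (S (crank t))) (NoDup_nodup _ _) eps Heps) as [l1 Hl1].
  destruct (hA t eps Heps) as [l2 Hl2].
  exists (l1 ++ l2); intros i Hi; apply in_or_app.
  destruct (classic (Bsupp i t)) as [Ht|Ht].
  - left; apply Hl1.
    pose proof (Rabs_apart_le i t Ht).
    pose proof (lsum_weight_le_window i (cenum t) t (S (crank t))).
    unfold Rmax in *; destruct (Rle_dec _ _); lra.
  - right; apply Hl2; rewrite bpart_out, Rminus_0_r in Hi by assumption.
    destruct (hAB i t) as [HAt|HBt].
    + unfold chi; destruct (excluded_middle_informative (A i t)); [|contradiction].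
      rewrite Rmult_1_r; exact Hi.
    + assert (F i t = 0) as Hz by (apply NNPP; intros Hz; apply Ht; split; assumption).
      rewrite Hz, Rabs_R0 in Hi; lra.
Qed.

Lemma split_type_c0l1_bounded : type_c0l1_bounded F k.
Proof.
  exists (fun i t => F i t - bpart i t), bpart; repeat split.
  - intros; ring.
  - apply lim0_apart.
  - apply abs_sum_le_bpart.
Qed.

End GreedyTruncation.

Theorem proposition2p22 (I Q : Type) (F : I -> Q -> R) (k : I -> R)
  (hk0 : forall i, 0 <= k i)
  (hkb : exists K : R, forall i, k i <= K)
  (hS : forall S : list Q, NoDup S ->
          le_mod_c0 (fun i => lsum (fun t => Rabs (F i t)) S) k)
  (hcount : forall t : Q, countable_pred (fun i => F i t <> 0)) :
  (type_c0l1 F <->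
     exists A B : I -> Q -> Prop,
       (forall i t, A i t \/ B i t) /\
       (forall i t, ~ (A i t /\ B i t)) /\
       (forall t, lim0 (fun i => F i t * chi A i t)) /\
       (forall i, countable_pred (fun t => B i t))) /\
  ((exists A B : I -> Q -> Prop,
       (forall i t, A i t \/ B i t) /\
       (forall i t, ~ (A i t /\ B i t)) /\
       (forall t, lim0 (fun i => F i t * chi A i t)) /\
       (forall i, countable_pred (fun t => B i t))) <->
     type_c0l1_bounded F k).
Proof.
  assert (Hbc : c0_countable_split F -> type_c0l1_bounded F k).
  { intros [A [B [hAB [_ [hA hB]]]]]; eapply split_type_c0l1_bounded; eauto. }
  assert (Hca : type_c0l1_bounded F k -> type_c0l1 F)
    by apply (type_c0l1_bounded_type_c0l1 F k hkb).
  pose proof (type_c0l1_split F) as Hab.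
  unfold c0_countable_split in *; tauto.
Qed.
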